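(* Let $\mu^s$ be a positive policy. Then: (a) for every $x\in\mathcal X$, $\kappa(\mu^s|x)=\max_{a\in\mathcal A(x)}\frac{1}{\mu^s(a|x)}\Big(1+\sum_{x'\text{ directly follows }(x,a)}\kappa(\mu^s|x')\Big)$; (b) $\kappa(\mu^s)=\sum_{x\in\mathcal X_1}\kappa(\mu^s|x)$; (c) for every $x\in\mathcal X$, $\kappa(\mu^s|x)\ge A^\tau(x)$, with equality for all $x$ simultaneously when $\mu^s=\mu^\star$, the balanced policy defined by $\mu^\star(a|x)=A^\tau(x,a)/A^\tau(x)$; (d) $\kappa(\mu^\star)=A_{\mathcal X}$.
   Context: Game structure. Fix $H\ge1$. The min-player's information sets form a finite set $\mathcal X$; each $x$ has a depth $h(x)\in\{1,\dots,H\}$ and a finite nonempty action set $\mathcal A(x)$; $\mathcal X_1$ is the set of depth-1 information sets. Perfect recall: every $x$ of depth $h$ has a unique history $(x_1,a_1,\dots,x_{h-1},a_{h-1},x_h=x)$ with $x_i$ of depth $i$, $a_i\in\mathcal A(x_i)$, and histories extend each other along the tree. $x'$ directly follows $(x,a)$ if $h(x')=h(x)+1$ and the history of $x'$ contains $x$ followed by $a$; $x$ is in the history of $x'$ if $x=x'_i$ for some $i$ (including $x=x'$); $(x,a)$ is in the history of $x'$ if $x$ is in the history of $x'$, $x\neq x'$, and the history of $x'$ contains $x$ followed by $a$. $A_{\mathcal X}=\sum_x|\mathcal A(x)|$. A policy is $\mu=(\mu(\cdot|x))_x$, $\mu(\cdot|x)\in\Delta_{\mathcal A(x)}$; $\Pi_{\min}$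 the set of policies; positive if all $\mu(a|x)>0$. Realization plan: $\mu_{1:}(x,a)=\prod_{i=1}^h\mu(a_i|x_i)$ (with $a_h=a$). For $x$ of depth $h$ and $(x',a')$ with $x$ in the history of $x'$ ($x'$ of depth $h'$, history $(x'_1,a'_1,\dots,x'_{h'})$, $a'_{h'}=a'$): $\mu_{h:}(x',a')=\prod_{i=h}^{h'}\mu(a'_i|x'_i)$. Define $\kappa(\mu^s)=\max_{\mu\in\Pi_{\min}}\sum_{x,a}\mu_{1:}(x,a)/\mu^s_{1:}(x,a)$ and, for $x$ of depth $h$, $\kappa(\mu^s|x)=\max_{\mu\in\Pi_{\min}}\sum_{x':\,x\text{ in history of }x'}\sum_{a'\in\mathcal A(x')}\mu_{h:}(x',a')/\mu^s_{h:}(x',a')$. Subtree action counts: $A^\tau(x,a)=1+\sum_{x':\,(x,a)\text{ in history of }x'}|\mathcal A(x')|$ and $A^\tau(x)=\sum_{a\in\mathcal A(x)}A^\tau(x,a)$. *)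

From HB Require Import structures.
From mathcomp Require Import all_boot all_order all_algebra.
From mathcomp Require Import boolp classical_sets reals.
Set Implicit Arguments. Unset Strict Implicit. Unset Printing Implicit Defensive.
Import Order.TTheory GRing.Theory Num.Theory.
Local Open Scope ring_scope.

(* The min-player's information-set tree.  Perfect recall is encoded by a
   parent map: the history of x is the history of its parent (y,a) followed
   by (y,a,x); depth-1 information sets have no parent. *)
Record game := Game {
  H : nat;
  Xt : finType;                       (* information sets *)
  Act : finType;
  acts : Xt -> {set Act};
  depth : Xt -> nat;
  par : Xt -> option (Xt * Act);      (* last (x_{h-1}, a_{h-1}) of the history *)
  H_ge1 : (1 <= H)%N;
  depth_range : forall x, (1 <= depth x <= H)%N;
  acts_nonempty : forall x, acts x != finset.set0;
  par_none : forall x, par x = None <-> depth x = 1%N;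
  par_some : forall x y a, par x = Some (y, a) ->
      depth x = (depth y).+1 /\ a \in acts y
}.

Section Defs.
Variable R : realType.
Variable G : game.
Local Notation X := (Xt G).
Local Notation A := (Act G).

Fixpoint anc (n : nat) (x : X) : option X :=
  match n with
  | 0 => Some x
  | n.+1 => if par x is Some (y, _) then anc n y else None
  end.

(* x is in the history of x' (x = x'_{h(x)}), including x = x' *)
Definition inhist (x x' : X) : bool :=
  (depth x <= depth x')%N && (anc (depth x' - depth x) x' == Some x).

Definition follows (x : X) (a : A) (x' : X) : bool := par x' == Some (x, a).

Definition inhist_act (x : X) (a : A) (x' : X) : bool :=
  [&& inhist x x', x != x' & [exists y, inhist y x' && follows x a y]].

Definition X1 : {set X} := [set x | depth x == 1%N].

Definition policy (mu : X -> A -> R) : Prop :=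
  forall x, (forall a, a \in acts x -> 0 <= mu x a) /\
            \sum_(a in acts x) mu x a = 1.

Definition positive_policy (mu : X -> A -> R) : Prop :=
  forall x a, a \in acts x -> 0 < mu x a.

(* product of mu(a_i|x_i) over the strict history of x (fuel = depth) *)
Fixpoint pathprod (mu : X -> A -> R) (n : nat) (x : X) : R :=
  match n with
  | 0 => 1
  | n.+1 => if par x is Some (y, a) then mu y a * pathprod mu n y else 1
  end.

Definition real1 (mu : X -> A -> R) (x : X) (a : A) : R :=
  mu x a * pathprod mu (depth x) x.

(* product of mu(a_i|x_i) over the history of x' strictly before x',
   from depth h(x) on (fuel = depth) *)
Fixpoint segprod (mu : X -> A -> R) (x : X) (n : nat) (x' : X) : R :=
  match n with
  | 0 => 1
  | n.+1 => if x' == x then 1 else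
            if par x' is Some (y, a) then mu y a * segprod mu x n y else 1
  end.

(* mu_{h:}(x',a') with h = h(x), for x in the history of x' *)
Definition realh (mu : X -> A -> R) (x x' : X) (a' : A) : R :=
  mu x' a' * segprod mu x (depth x') x'.

(* kappa(mu^s) = max over policies (written as sup; the max is attained) *)
Definition kappa (mus : X -> A -> R) : R :=
  sup [set v | exists mu, policy mu /\
     v = \sum_(x : X) \sum_(a in acts x) real1 mu x a / real1 mus x a].

Definition kappa_at (mus : X -> A -> R) (x : X) : R :=
  sup [set v | exists mu, policy mu /\
     v = \sum_(x' : X | inhist x x') \sum_(a' in acts x')
            realh mu x x' a' / realh mus x x' a'].

Definition Atau_act (x : X) (a : A) : nat :=
  (1 + \sum_(x' : X | inhist_act x a x') #|acts x'|)%N.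

Definition Atau (x : X) : nat := (\sum_(a in acts x) Atau_act x a)%N.

Definition A_X : nat := (\sum_(x : X) #|acts x|)%N.

Definition mustar (x : X) (a : A) : R := (Atau_act x a)%:R / (Atau x)%:R.

End Defs.

From Pilot Require Import Defs.
From HB Require Import structures.
From mathcomp Require Import all_boot all_order all_algebra.
From mathcomp Require Import boolp classical_sets reals.
From mathcomp Require Import zify.
Import Order.TTheory GRing.Theory Num.Theory.
Local Open Scope ring_scope.

Set Implicit Arguments. Unset Strict Implicit. Unset Printing Implicit Defensive.

(* For a sampling policy mus and a target policy mu, let [value mus mu x] be
   the sum, over the subtree of x, of the ratios mu_{h:}/mus_{h:}.  Realization
   weights factor along histories, and the subtree of x is x itself together
   with the subtrees of the children c reached through each action a, so
     value x = sum_a mu(a|x)/mus(a|x) * (1 + sum_c value c).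
   Maximizing over mu is hence a backward dynamic program: the optimum
   [kappa_opt x] is the max over a of (1 + sum_c kappa_opt c)/mus(a|x), and it is
   attained by a deterministic greedy policy.  This gives (a), and (b) because
   the whole tree is the disjoint union of the subtrees of the depth-1 sets.
   For (c) and (d), the subtree action counts satisfy
   Atau_act x a = 1 + sum_c Atau c; averaging the recursion against mus bounds
   kappa_opt below by Atau, and for the balanced policy every action attains
   exactly Atau x. *)

Lemma sup_attained (R : realType) (E : set R) (M : R) :
  E M -> (forall y, E y -> y <= M) -> sup E = M.
Proof.
move=> EM ub; apply: le_anti; apply/andP; split.
  by apply: ge_sup; [exists M | move=> y; exact: ub].
by apply: ub_le_sup => //; exists M => y; exact: ub.
Qed.

Lemma big_partition_rel (V : Type) (idx : V) (op : Monoid.com_law idx)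
    (I J : finType) (P : pred I) (S : pred J) (Q : I -> J -> bool) (F : I -> V) :
  (forall i, P i -> exists2 j, S j & Q i j) ->
  (forall i j1 j2, S j1 -> S j2 -> Q i j1 -> Q i j2 -> j1 = j2) ->
  (forall i j, S j -> Q i j -> P i) ->
  \big[op/idx]_(i | P i) F i = \big[op/idx]_(j | S j) \big[op/idx]_(i | Q i j) F i.
Proof.
move=> block block_uniq block_P.
transitivity (\big[op/idx]_(i | P i) \big[op/idx]_(j | S j && Q i j) F i).
  apply: eq_bigr => i Pi; have [j Sj Qij] := block i Pi.
  rewrite (bigD1 j) /= ?Sj ?Qij // big1 ?Monoid.mulm1 // => k.
  case/andP=> /andP [Sk Qik] /negP; by rewrite (block_uniq i k j).
rewrite (exchange_big_dep S) /=; last by move=> i j _ /andP [].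
apply: eq_bigr => j Sj; apply: eq_bigl => i.
case Qij: (Q i j); rewrite ?andbT ?andbF //.
by rewrite (block_P _ _ Sj Qij) Sj.
Qed.

Section HistoryTree.
Variable G : game.
Local Notation X := (Xt G).
Local Notation A := (Act G).

Lemma parent_ind (Q : X -> Prop) :
  (forall x, (forall y b, par x = Some (y, b) -> Q y) -> Q x) -> forall x, Q x.
Proof.
move=> IH x; move: {2}(depth x) (leqnn (depth x)) => n.
elim: n x => [|n IHn] x hx.
  by have := depth_range x; rewrite (leqNgt 1) (leq_ltn_trans hx).
apply: IH => y b /par_some [dx _]; apply: IHn; by rewrite -ltnS -dx.
Qed.

(* Induction towards the leaves: depths are bounded by H. *)
Lemma children_ind (Q : X -> Prop) :
  (forall x, (forall c a, follows x a c -> Q c) -> Q x) -> forall x, Q x.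
Proof.
move=> IH x; move: {2}(H G - depth x)%N (leqnn (H G - depth x)%N) => n.
elim: n x => [|n IHn] x hx; apply: IH => c a /eqP /par_some [dc _];
  have := depth_range c; rewrite dc => /andP [_ hc].
- by exfalso; move: hx hc; lia.
- by apply: IHn; move: hx hc; lia.
Qed.

Lemma follows_depth (x c : X) (a : A) : follows x a c ->
  depth c = (depth x).+1 /\ a \in acts x.
Proof. by move/eqP/par_some. Qed.

Lemma inhist_refl (x : X) : inhist x x.
Proof. by rewrite /inhist leqnn subnn /=. Qed.

Lemma inhist_depth (x x' : X) : inhist x x' -> (depth x <= depth x')%N.
Proof. by case/andP. Qed.

Lemma inhist_depth_inj (c1 c2 x' : X) : inhist c1 x' -> inhist c2 x' ->
  depth c1 = depth c2 -> c1 = c2.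
Proof.
case/andP=> _ /eqP h1 /andP [_ /eqP h2] e.
by move: h1 h2; rewrite e => -> [].
Qed.

Lemma inhist_parent (z x' : X) : inhist z x' -> x' != z ->
  exists y b, par x' = Some (y, b) /\ inhist z y.
Proof.
case/andP=> hd /eqP ha hne.
case k: (depth x' - depth z)%N ha => [|k'] /=.
  by move=> [e]; rewrite e eqxx in hne.
case p: (par x') => [[y b]|] // ha; exists y, b; split => //.
have [dy _] := par_some p.
apply/andP; split; first by move: k; rewrite dy; lia.
have -> : (depth y - depth z = k')%N by move: k; rewrite dy; lia.
by rewrite ha.
Qed.

Lemma inhist_extend (z y x' : X) (b : A) :
  par x' = Some (y, b) -> inhist z y -> inhist z x'.
Proof.
move=> p /andP [hd /eqP ha]; have [dy _] := par_some p.
apply/andP; split; first by rewrite dy; lia.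
by rewrite dy subSn //= p ha.
Qed.

Lemma inhist_trans (z y x' : X) : inhist z y -> inhist y x' -> inhist z x'.
Proof.
move=> hzy; elim/parent_ind: x' => x' IH hyx.
case: (eqVneq x' y) => [-> // | ne].
have [y' [b [p hy']]] := inhist_parent hyx ne.
exact: inhist_extend p (IH _ _ p hy').
Qed.

Lemma child_inhist (x c x' : X) (a : A) : follows x a c -> inhist c x' ->
  inhist x x' /\ x != x'.
Proof.
move=> hf hc; have /eqP p := hf; have [dc _] := par_some p.
split; first exact: inhist_trans (inhist_extend p (inhist_refl x)) hc.
by apply/eqP => e; have := inhist_depth hc; rewrite -e dc; lia.
Qed.

Lemma inhist_child (x x' : X) : inhist x x' -> x' != x ->
  exists c a, follows x a c /\ inhist c x'.
Proof.
elim/parent_ind: x' => x' IH hin hne.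
have [y [b [p hy]]] := inhist_parent hin hne.
case: (eqVneq y x) => [e | nyx].
  by exists x', b; split; [rewrite /follows p e | exact: inhist_refl].
have [c [a [hf hc]]] := IH _ _ p hy nyx.
by exists c, a; split => //; exact: inhist_extend p hc.
Qed.

Lemma child_on_path_uniq (x c1 c2 x' : X) (a1 a2 : A) :
  follows x a1 c1 -> inhist c1 x' -> follows x a2 c2 -> inhist c2 x' ->
  c1 = c2 /\ a1 = a2.
Proof.
move=> f1 h1 f2 h2.
have [d1 _] := follows_depth f1; have [d2 _] := follows_depth f2.
have e := inhist_depth_inj h1 h2 (etrans d1 (esym d2)).
split => //; move: f1 f2; rewrite /follows e => /eqP -> /eqP [] //.
Qed.

Lemma root_exists (x : X) : exists2 r, r \in X1 G & inhist r x.
Proof.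
elim/parent_ind: x => x IH.
case p: (par x) => [[y b]|].
  by have [r hr hy] := IH _ _ p; exists r => //; exact: inhist_extend p hy.
by exists x; rewrite ?inhist_refl // inE; apply/eqP; exact/par_none.
Qed.

Section SubtreeSums.
Variables (V : Type) (idx : V) (op : Monoid.com_law idx).

Lemma big_subtree (x : X) (F : X -> V) :
  \big[op/idx]_(x' | inhist x x') F x' =
  op (F x) (\big[op/idx]_(a in acts x) \big[op/idx]_(x' | inhist_act x a x') F x').
Proof.
rewrite (bigD1 x) ?inhist_refl //=; congr (op _ _).
apply: big_partition_rel.
- move=> x' /andP [hin hne]; have [c [a [hf hc]]] := inhist_child hin hne.
  exists a; first by have [] := follows_depth hf.
  rewrite /inhist_act hin eq_sym hne /=; apply/existsP; exists c.
  by rewrite hc hf.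
- move=> x' a1 a2 _ _ /and3P [_ _ /existsP [c1 /andP [h1 f1]]].
  move=> /and3P [_ _ /existsP [c2 /andP [h2 f2]]].
  by have [] := child_on_path_uniq f1 h1 f2 h2.
- by move=> x' a _ /and3P [-> hne _]; rewrite eq_sym hne.
Qed.

Lemma big_action_subtree (x : X) (a : A) (F : X -> V) :
  \big[op/idx]_(x' | inhist_act x a x') F x' =
  \big[op/idx]_(c | follows x a c) \big[op/idx]_(x' | inhist c x') F x'.
Proof.
apply: big_partition_rel.
- move=> x' /and3P [_ _ /existsP [c /andP [h f]]]; by exists c.
- move=> x' c1 c2 f1 f2 h1 h2.
  by have [] := child_on_path_uniq f1 h1 f2 h2.
- move=> x' c f h; have [hin hne] := child_inhist f h.
  rewrite /inhist_act hin hne /=; apply/existsP; exists c; by rewrite h f.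
Qed.

Lemma big_subtree_children (x : X) (F : X -> V) :
  \big[op/idx]_(x' | inhist x x') F x' =
  op (F x) (\big[op/idx]_(a in acts x) \big[op/idx]_(c | follows x a c)
              \big[op/idx]_(x' | inhist c x') F x').
Proof.
rewrite big_subtree; congr (op _ _).
by apply: eq_bigr => a _; exact: big_action_subtree.
Qed.

Lemma big_roots (F : X -> V) :
  \big[op/idx]_(x : X) F x =
  \big[op/idx]_(r in X1 G) \big[op/idx]_(x | inhist r x) F x.
Proof.
apply: big_partition_rel => //.
- by move=> x _; exact: root_exists.
- move=> x r1 r2; rewrite !inE => /eqP d1 /eqP d2 h1 h2.
  by apply: (inhist_depth_inj h1 h2); rewrite d1 d2.
Qed.

End SubtreeSums.
End HistoryTree.

Section Realization.
Variables (R : realType) (G : game).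
Local Notation X := (Xt G).
Local Notation A := (Act G).
Implicit Types mu mus : X -> A -> R.

Lemma segprod_split mu (x c x' : X) (a : A) n :
  follows x a c -> inhist c x' -> (depth x' - depth x <= n)%N ->
  segprod mu x n x' = mu x a * segprod mu c n x'.
Proof.
move=> hf; have /eqP p := hf; have [dc _] := par_some p.
elim/parent_ind: x' n => x' IH n hc hn.
have [_ nx] := child_inhist hf hc; rewrite eq_sym in nx.
case: (eqVneq x' c) => [e | ne].
  subst x'; case: n hn => [|n] hn; first by move: hn; rewrite dc; lia.
  by rewrite /= (negbTE nx) eqxx p; case: n {hn} => [|n] /=; rewrite ?eqxx.
have [y [b [py hy]]] := inhist_parent hc ne.
have [dy _] := par_some py.
case: n hn => [|n] hn.
  by exfalso; move: hn (inhist_depth hc); rewrite dc; lia.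
rewrite /= (negbTE nx) (negbTE ne) py (IH _ _ py) //; last by move: hn; rewrite dy; lia.
by rewrite mulrCA.
Qed.

Lemma realh_split mu (x c x' : X) (a a' : A) :
  follows x a c -> inhist c x' ->
  realh mu x x' a' = mu x a * realh mu c x' a'.
Proof.
by move=> hf hc; rewrite /realh (segprod_split _ hf hc) ?leq_subr // mulrCA.
Qed.

Lemma realh_self mu (x : X) (a : A) : realh mu x x a = mu x a.
Proof.
rewrite /realh; have := depth_range x; case: (depth x) => [//|n] _.
by rewrite /= eqxx mulr1.
Qed.

Lemma pathprod_from_root mu (r x : X) n : r \in X1 G -> inhist r x ->
  pathprod mu n x = segprod mu r n x.
Proof.
move=> hr; elim: n x => [//|n IH] x hx /=.
case: (eqVneq x r) => [e | ne].
  by subst x; move: hr; rewrite inE => /eqP /par_none ->.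
have [y [b [p hy]]] := inhist_parent hx ne.
by rewrite p IH.
Qed.

Definition value mus mu (x : X) : R :=
  \sum_(x' | inhist x x') \sum_(a' in acts x') realh mu x x' a' / realh mus x x' a'.

Lemma value_rec mus mu (x : X) :
  value mus mu x =
  \sum_(a in acts x) mu x a / mus x a * (1 + \sum_(c | follows x a c) value mus mu c).
Proof.
rewrite /value (big_subtree_children (+%R : Monoid.com_law (0:R)) x) /=.
under eq_bigr do rewrite !realh_self.
rewrite -big_split /=; apply: eq_bigr => a _.
rewrite mulrDr mulr1 mulr_sumr; congr (_ + _); apply: eq_bigr => c hf.
rewrite mulr_sumr; apply: eq_bigr => x' hc.
rewrite mulr_sumr; apply: eq_bigr => a' _.
by rewrite (realh_split mu _ hf hc) (realh_split mus _ hf hc) invfM mulrACA.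
Qed.

(* The global ratio sum is the sum of the subtree values of the roots
   (Defs.real1 is qualified because ssrnum also exports a lemma real1). *)
Lemma total_value_roots mus mu :
  \sum_(x : X) \sum_(a in acts x) Defs.real1 mu x a / Defs.real1 mus x a =
  \sum_(r in X1 G) value mus mu r.
Proof.
rewrite (big_roots (+%R : Monoid.com_law (0:R))); apply: eq_bigr => r hr.
apply: eq_bigr => x hx; apply: eq_bigr => a _.
by rewrite /Defs.real1 /realh !(pathprod_from_root _ _ hr hx).
Qed.

Lemma policy_average_le mu (x : X) (f : A -> R) (M : R) : policy mu ->
  (forall a, a \in acts x -> f a <= M) -> \sum_(a in acts x) mu x a * f a <= M.
Proof.
move=> hmu hf; apply: (@le_trans _ _ (\sum_(a in acts x) mu x a * M)).
  by apply: ler_sum => a ha; apply: ler_wpM2l; [exact: (hmu x).1 | exact: hf].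
by rewrite -mulr_suml (hmu x).2 mul1r.
Qed.

End Realization.

Section OptimalValue.
Variables (R : realType) (G : game) (mus : Xt G -> Act G -> R).
Hypothesis mus_pos : positive_policy mus.
Local Notation X := (Xt G).
Local Notation A := (Act G).

(* Backward induction, with enough fuel to reach the leaves. *)
Fixpoint kappa_opt_fuel (n : nat) (x : X) : R :=
  if n is n'.+1 then
    \big[Num.max/0]_(a in acts x)
       (1 / mus x a * (1 + \sum_(c | follows x a c) kappa_opt_fuel n' c))
  else 0.

Definition kappa_opt (x : X) : R := kappa_opt_fuel (H G - depth x).+1 x.

Definition action_value (x : X) (a : A) : R :=
  1 / mus x a * (1 + \sum_(c | follows x a c) kappa_opt c).

(* The fuel is always sufficient, so kappa_opt solves the Bellman equation. *)
Lemma kappa_opt_rec (x : X) :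
  kappa_opt x = \big[Num.max/0]_(a in acts x) action_value x a.
Proof.
apply: eq_bigr => a _; congr (_ * (1 + _)).
apply: eq_bigr => c /follows_depth [dc _]; rewrite /kappa_opt.
have -> // : (H G - depth x = (H G - depth c).+1)%N.
by have := depth_range c; rewrite dc; lia.
Qed.

Lemma kappa_opt_ge0 (x : X) : 0 <= kappa_opt x.
Proof. by rewrite kappa_opt_rec bigmax_ge_id. Qed.

Lemma action_value_ge0 (x : X) (a : A) : a \in acts x -> 0 <= action_value x a.
Proof.
move=> ha; apply: mulr_ge0; first by rewrite divr_ge0 ?ltW ?mus_pos.
by rewrite addr_ge0 // sumr_ge0 // => c _; exact: kappa_opt_ge0.
Qed.

Lemma action_value_le (x : X) (a : A) : a \in acts x -> action_value x a <= kappa_opt x.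
Proof. by move=> ha; rewrite kappa_opt_rec; exact: le_bigmax_cond. Qed.

Lemma ratio_action_value (mu : X -> A -> R) (x : X) (a : A) :
  mu x a / mus x a * (1 + \sum_(c | follows x a c) kappa_opt c) =
  mu x a * action_value x a.
Proof. by rewrite /action_value mul1r mulrA. Qed.

(* No policy does better than kappa_opt: induction from the leaves, bounding
   each action's contribution by its action value, then averaging. *)
Lemma value_le_kappa_opt (mu : X -> A -> R) : policy mu ->
  forall x, value mus mu x <= kappa_opt x.
Proof.
move=> hmu; elim/children_ind => x IH; rewrite value_rec.
apply: (@le_trans _ _ (\sum_(a in acts x) mu x a * action_value x a)).
  apply: ler_sum => a ha; rewrite -ratio_action_value.
  apply: ler_wpM2l; first by rewrite divr_ge0 ?(hmu x).1 ?ltW ?mus_pos.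
  by rewrite lerD2l; apply: ler_sum => c hc; exact: IH hc.
by apply: policy_average_le => // a ha; exact: action_value_le.
Qed.

Lemma greedy_action_exists (x : X) :
  exists2 a0, a0 \in acts x & kappa_opt x = action_value x a0.
Proof.
have /set0Pn [a1 ha1] := acts_nonempty x.
have [a0 h0 e] := eq_bigmax a1 (fun a => a \in acts x) (action_value x) ha1
  (@action_value_ge0 x).
by exists a0; rewrite // kappa_opt_rec.
Qed.

Definition greedy (x : X) (a : A) : R :=
  if [pick a0 in acts x | kappa_opt x == action_value x a0] is Some a0
  then (a == a0)%:R else 0.

Lemma greedyE (x : X) : exists a0, [/\ a0 \in acts x,
  kappa_opt x = action_value x a0 & forall a, greedy x a = (a == a0)%:R].
Proof.
rewrite /greedy; case: pickP => [a0 /andP [h /eqP e] | none]; first by exists a0.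
have [a0 h0 e] := greedy_action_exists x.
by have := none a0; rewrite h0 e eqxx.
Qed.

Lemma greedy_policy : policy greedy.
Proof.
move=> x; have [a0 [h0 _ e]] := greedyE x; split.
  by move=> a _; rewrite e ler0n.
rewrite (bigD1 a0) //= e eqxx big1 ?addr0 // => a /andP [_ /negbTE na].
by rewrite e na.
Qed.

Lemma value_greedy (x : X) : value mus greedy x = kappa_opt x.
Proof.
elim/children_ind: x => x IH.
have [a0 [h0 eK e]] := greedyE x.
rewrite value_rec (bigD1 a0) //= [X in _ + X]big1 ?addr0; last first.
  by move=> a /andP [_ /negbTE na]; rewrite e na /= mulr0n !mul0r.
under eq_bigr => c hc do rewrite (IH c a0 hc).
by rewrite ratio_action_value e eqxx mul1r eK.
Qed.

Lemma kappa_atE (x : X) : kappa_at mus x = kappa_opt x.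
Proof.
apply: sup_attained.
  by exists greedy; split; [exact: greedy_policy | exact/esym/value_greedy].
by move=> v [mu [hmu ->]]; exact: value_le_kappa_opt.
Qed.

Lemma kappaE : kappa mus = \sum_(r in X1 G) kappa_opt r.
Proof.
apply: sup_attained.
  exists greedy; split; first exact: greedy_policy.
  by rewrite total_value_roots; apply: eq_bigr => r _; rewrite value_greedy.
move=> v [mu [hmu ->]]; rewrite total_value_roots; apply: ler_sum => r _.
exact: value_le_kappa_opt.
Qed.

End OptimalValue.

Section ActionCounts.
Variable G : game.
Local Notation X := (Xt G).
Local Notation A := (Act G).

Lemma Atau_subtree (x : X) : Atau x = (\sum_(x' | inhist x x') #|acts x'|)%N.
Proof. by rewrite (big_subtree addn) /Atau /Atau_act big_split /= sum1_card. Qed.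

(* The action counts obey the same recursion as the optimal value. *)
Lemma Atau_act_rec (x : X) (a : A) :
  Atau_act x a = (1 + \sum_(c | follows x a c) Atau c)%N.
Proof.
rewrite /Atau_act (big_action_subtree addn); congr (1 + _)%N.
by apply: eq_bigr => c _; rewrite Atau_subtree.
Qed.

(* Positivity of the counts makes the balanced policy well defined. *)
Lemma Atau_act_gt0 (x : X) (a : A) : (0 < Atau_act x a)%N.
Proof. by []. Qed.

Lemma Atau_gt0 (x : X) : (0 < Atau x)%N.
Proof.
have /set0Pn [a ha] := acts_nonempty x.
by rewrite /Atau (bigD1 a) //= addn_gt0 Atau_act_gt0.
Qed.

Lemma A_X_roots : A_X G = (\sum_(r in X1 G) Atau r)%N.
Proof. by rewrite /A_X (big_roots addn); apply: eq_bigr => r _; rewrite Atau_subtree. Qed.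

Variable R : realType.

(* Averaging the recursion against mus itself: kappa_opt x >= Atau x. *)
Lemma Atau_le_kappa_opt (mus : X -> A -> R) : policy mus -> positive_policy mus ->
  forall x, (Atau x)%:R <= kappa_opt mus x.
Proof.
move=> hpol hpos; elim/children_ind => x IH.
apply: (@le_trans _ _ (\sum_(a in acts x) mus x a * action_value mus x a)).
  rewrite /Atau natr_sum; apply: ler_sum => a ha.
  rewrite -ratio_action_value divff ?mul1r ?gt_eqF ?hpos //.
  rewrite Atau_act_rec natrD natr_sum lerD2l.
  by apply: ler_sum => c hc; exact: IH hc.
by apply: policy_average_le => // a ha; exact: action_value_le.
Qed.

Lemma mustar_positive : positive_policy (@mustar R G).
Proof. by move=> x a _; rewrite divr_gt0 // ltr0n ?Atau_act_gt0 ?Atau_gt0. Qed.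

Lemma mustar_policy : policy (@mustar R G).
Proof.
move=> x; split; first by move=> a _; rewrite divr_ge0 ?ler0n.
rewrite /mustar -mulr_suml -natr_sum.
by rewrite divff // pnatr_eq0 -lt0n Atau_gt0.
Qed.

Lemma kappa_opt_mustar (x : X) : kappa_opt (@mustar R G) x = (Atau x)%:R.
Proof.
elim/children_ind: x => x IH; apply: le_anti; apply/andP; split; last first.
  exact: Atau_le_kappa_opt mustar_policy mustar_positive x.
rewrite kappa_opt_rec bigmax_le ?ler0n // => a ha.
rewrite /action_value; under eq_bigr => c hc do rewrite (IH c a hc).
have -> : 1 + \sum_(c | follows x a c) (Atau c)%:R = (Atau_act x a)%:R :> R.
  by rewrite Atau_act_rec natrD natr_sum.
by rewrite /mustar div1r invf_div divfK // pnatr_eq0 -lt0n Atau_act_gt0.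
Qed.

End ActionCounts.

Theorem mainTheorem10 (R : realType) (G : game) :
  (forall mus : Xt G -> Act G -> R, policy mus -> positive_policy mus ->
    [/\ (* (a) *)
        (forall x : Xt G,
           kappa_at mus x =
           \big[Num.max/0]_(a in acts x)
              (1 / mus x a * (1 + \sum_(x' : Xt G | follows x a x') kappa_at mus x'))),
        (* (b) *)
        kappa mus = \sum_(x in X1 G) kappa_at mus x
      & (* (c), inequality *)
        (forall x : Xt G, (Atau x)%:R <= kappa_at mus x)]) /\
  (* (c), equality for the balanced policy *)
  (forall x : Xt G, kappa_at (@mustar R G) x = (Atau x)%:R) /\
  (* (d) *)
  kappa (@mustar R G) = (A_X G)%:R.
Proof.
split; [move=> mus hpol hpos; split | split].
- move=> x; rewrite (kappa_atE hpos) kappa_opt_rec; apply: eq_bigr => a _.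
  by under [in RHS]eq_bigr do rewrite (kappa_atE hpos).
- by rewrite (kappaE hpos); apply: eq_bigr => r _; rewrite (kappa_atE hpos).
- by move=> x; rewrite (kappa_atE hpos); exact: Atau_le_kappa_opt.
- by move=> x; rewrite (kappa_atE (@mustar_positive G R)) kappa_opt_mustar.
- rewrite (kappaE (@mustar_positive G R)) A_X_roots natr_sum.
  by apply: eq_bigr => r _; rewrite kappa_opt_mustar.
Qed.
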